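(* Let $h>0$, $0<\alpha\le 0.1$, and let $\overline S=\{(kh,h):k\in\mathbb Z\}\subseteq S$ be the camera grid of resolution $\delta_d=h$. For every target $g\in G$, $$\overline\varepsilon(g)\;\le\;1.72\,\varepsilon(g,S),\qquad\text{where }\ \overline\varepsilon(g)=\min_{s_i,s_j\in\overline S}\varepsilon(g,\{s_i,s_j\}).$$
   Context: Work in $\mathbb{R}^2$ with coordinates $(x,z)$. The ground line is $G=\{z=0\}$ and the viewing line is $S=\{z=h\}$. For a point $s$ and unit vector $u$, the wedge $W(s,u)=\{s+rv:\ r\ge0,\ |v|=1,\ \angle(v,u)\le\alpha\}$ (opening angle $2\alpha$). For target $g$ and camera $s$, $\mathcal W(g,s)$ is the set of all wedges $W(s,u)$ containing $g$. For $C\subseteq S$, $\varepsilon(g,C)=\sup\{\operatorname{diam}(\bigcap_{s\in C}W_s): W_s\in\mathcal W(g,s)\ \forall s\in C\}$. *)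

From Stdlib Require Import Reals Lra.
Open Scope R_scope.

Definition pt := (R * R)%type.

Definition dot (a b : pt) : R := fst a * fst b + snd a * snd b.
Definition norm (a : pt) : R := sqrt (dot a a).
Definition dist (a b : pt) : R := norm (fst a - fst b, snd a - snd b).

(* Angle between two unit vectors. *)
Definition angle (v u : pt) : R := acos (dot v u).

Definition ground (g : pt) : Prop := snd g = 0.
Definition viewline (h : R) (s : pt) : Prop := snd s = h.

Definition wedge (alpha : R) (s u : pt) (p : pt) : Prop :=
  exists r v, 0 <= r /\ norm v = 1 /\ angle v u <= alpha /\
    p = (fst s + r * fst v, snd s + r * snd v).

Definition admissible (alpha : R) (g s u : pt) : Prop :=
  norm u = 1 /\ wedge alpha s u g.

Definition diam_le (A : pt -> Prop) (c : R) : Prop :=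
  forall p q, A p -> A q -> dist p q <= c.

(* eps(g,C) <= c, where eps(g,C) is the supremum over all admissible
   choices (W_s)_{s in C} (encoded by the axis map u) of diam(cap_{s in C} W_s). *)
Definition eps_le (alpha : R) (g : pt) (C : pt -> Prop) (c : R) : Prop :=
  forall u : pt -> pt,
    (forall s, C s -> admissible alpha g s (u s)) ->
    diam_le (fun p => forall s, C s -> wedge alpha s (u s) p) c.

Definition grid (h : R) (s : pt) : Prop := exists k : Z, s = (IZR k * h, h).

Definition pair_set (a b : pt) (s : pt) : Prop := s = a \/ s = b.

From Pilot Require Import Defs.
From Stdlib Require Import Reals Lra Psatz.
Open Scope R_scope.

(* A point [p] lies in [W(s,u)] iff [p - s] makes cosine at least [cos α] with [u]; hence two
   points lie in a common wedge at [s] iff they are seen from [s] under an angle at most [2α].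

   Lower bound: from every camera of [S], the target [g] and the point at depth
   [c h], [c = 2 sin 2α (1 + sin 2α) / cos² 2α], below it are seen under an angle at most [2α],
   so [ε(g,S) ≥ c h].

   Upper bound: take the grid cameras [(kh,h)] and [((k+2)h,h)] with [g] at horizontal offset
   in [[h/2, 3h/2]] from the first. Points of the intersection lie below the cameras, and in
   terms of the slopes [t = (x - a)/(h - z)] of the rays from a camera [(a,h)] the wedge
   constraints read [cos 2α |t - t'| ≤ sin 2α (1 + t t')]. They confine the slopes to explicit
   intervals, and the squared distance of two points, a rational function of their four
   slopes, is bounded by [(1.72 c h)²] through polynomial estimates valid for [sin 2α ≤ 1/5]. *)

Definition vsub (p q : pt) : pt := (fst p - fst q, snd p - snd q).
Definition vadd (p q : pt) : pt := (fst p + fst q, snd p + snd q).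
Definition cross (a b : pt) : R := fst a * snd b - snd a * fst b.
Definition normalize (a : pt) : pt := (fst a / norm a, snd a / norm a).
Definition bisector (a b : pt) : pt := normalize (vadd (normalize a) (normalize b)).

Lemma Rabs_mul_self (x : R) : Rabs x * Rabs x = x * x.
Proof. symmetry. exact (Rsqr_abs x). Qed.

Lemma dot_self_nonneg (a : pt) : 0 <= dot a a.
Proof. unfold dot. nra. Qed.

Lemma norm_sqr (a : pt) : norm a * norm a = dot a a.
Proof. apply sqrt_sqrt, dot_self_nonneg. Qed.

Lemma norm_nonneg (a : pt) : 0 <= norm a.
Proof. apply sqrt_pos. Qed.

Lemma dot_self_of_norm_1 (u : pt) : norm u = 1 -> dot u u = 1.
Proof. intro H. rewrite <- norm_sqr, H. ring. Qed.

Lemma norm_pos (a : pt) : snd a <> 0 -> 0 < norm a.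
Proof.
  intro H. apply sqrt_lt_R0. unfold dot.
  assert (0 < snd a * snd a) by (destruct (Rlt_or_le (snd a) 0); nra). nra.
Qed.

Lemma lagrange_identity (a b : pt) : dot a b * dot a b + cross a b * cross a b = dot a a * dot b b.
Proof. unfold dot, cross. ring. Qed.

Lemma dot_sqr_le (a b : pt) : dot a b * dot a b <= dot a a * dot b b.
Proof. rewrite <- lagrange_identity. pose proof (Rle_0_sqr (cross a b)). unfold Rsqr in *. lra. Qed.

Lemma wedge_cos_le (alpha : R) (s u p : pt) :
  0 <= alpha <= PI -> norm u = 1 -> wedge alpha s u p ->
  cos alpha * norm (vsub p s) <= dot (vsub p s) u.
Proof.
  intros Ha Hu (r & v & Hr & Hv & Hang & Hp).
  apply dot_self_of_norm_1 in Hu, Hv.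
  assert (Hd : -1 <= dot v u <= 1).
  { pose proof (dot_sqr_le v u). rewrite Hu, Hv in *. split; nra. }
  assert (Hc : cos alpha <= dot v u).
  { rewrite <- (cos_acos (dot v u) Hd). unfold angle in Hang.
    apply cos_decr_1; try lra; pose proof (acos_bound (dot v u)); lra. }
  assert (Hpv : vsub p s = (r * fst v, r * snd v)) by (rewrite Hp; unfold vsub; simpl; f_equal; ring).
  assert (Hn : norm (vsub p s) = r).
  { unfold norm. rewrite Hpv. replace (dot (r * fst v, r * snd v) (r * fst v, r * snd v))
      with (r * r * dot v v) by (unfold dot; simpl; ring).
    rewrite Hv, Rmult_1_r. apply sqrt_square. exact Hr. }
  rewrite Hn, Hpv. replace (dot (r * fst v, r * snd v) u) with (r * dot v u) by (unfold dot; simpl; ring).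
  nra.
Qed.

Lemma wedge_of_cos_le (alpha : R) (s u p : pt) :
  0 <= alpha <= PI -> dot u u = 1 -> 0 < norm (vsub p s) ->
  cos alpha * norm (vsub p s) <= dot (vsub p s) u -> wedge alpha s u p.
Proof.
  intros Ha Hu Hr H. remember (vsub p s) as w eqn:Ew.
  pose proof (norm_sqr w) as E. set (r := norm w) in *.
  destruct w as [wx wz]. unfold dot in E; simpl in E.
  assert (Hnw : normalize (wx, wz) = (wx / r, wz / r)) by reflexivity.
  assert (Hv : dot (normalize (wx, wz)) (normalize (wx, wz)) = 1).
  { rewrite Hnw. unfold dot; simpl.
    replace (wx / r * (wx / r) + wz / r * (wz / r)) with ((wx * wx + wz * wz) / (r * r)) by (field; lra).
    rewrite <- E. field. lra. }
  assert (Hvu : dot (normalize (wx, wz)) u = dot (wx, wz) u / r)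
    by (rewrite Hnw; unfold dot; simpl; field; lra).
  assert (Hd : -1 <= dot (normalize (wx, wz)) u <= 1).
  { pose proof (dot_sqr_le (normalize (wx, wz)) u). rewrite Hu, Hv in *. split; nra. }
  assert (Hc : cos alpha <= dot (normalize (wx, wz)) u).
  { rewrite Hvu. apply (Rmult_le_reg_r r); [lra|]. field_simplify; lra. }
  exists r, (normalize (wx, wz)). repeat split.
  - lra.
  - unfold norm. rewrite Hv. apply sqrt_1.
  - unfold angle. pose proof (COS_bound alpha).
    apply cos_decr_0; try lra; try (pose proof (acos_bound (dot (normalize (wx, wz)) u)); lra).
    rewrite cos_acos by lra. lra.
  - rewrite Hnw. unfold vsub in Ew. injection Ew as E1 E2. simpl.
    destruct p as [px pz]; simpl in *. f_equal; field_simplify; lra.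
Qed.

Lemma dot_ge_of_common_axis (c : R) (a b u : pt) : dot u u = 1 -> 0 <= c <= 1 ->
  c * norm a <= dot a u -> c * norm b <= dot b u ->
  (2*c*c - 1) * norm a * norm b <= dot a b.
Proof.
  intros Hu Hc Ha Hb.
  pose proof (norm_sqr a) as Hna. pose proof (norm_sqr b) as Hnb.
  pose proof (norm_nonneg a) as Hna0. pose proof (norm_nonneg b) as Hnb0.
  set (na := norm a) in *. set (nb := norm b) in *.
  destruct a as [ax az]. destruct b as [bx bz]. destruct u as [ux uz].
  unfold dot in *; simpl in *.
  set (A1 := ax*ux + az*uz) in *. set (A2 := az*ux - ax*uz).
  set (B1 := bx*ux + bz*uz) in *. set (B2 := bz*ux - bx*uz).
  assert (EA : A1*A1 + A2*A2 = na*na).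
  { rewrite Hna. unfold A1, A2. transitivity ((ax*ax+az*az)*(ux*ux+uz*uz)); [ring | rewrite Hu; ring]. }
  assert (EB : B1*B1 + B2*B2 = nb*nb).
  { rewrite Hnb. unfold B1, B2. transitivity ((bx*bx+bz*bz)*(ux*ux+uz*uz)); [ring | rewrite Hu; ring]. }
  assert (Eab : ax*bx + az*bz = A1*B1 + A2*B2).
  { unfold A1, A2, B1, B2. transitivity ((ax*bx+az*bz)*(ux*ux+uz*uz)); [rewrite Hu; ring | ring]. }
  assert (HA0 : 0 <= c*na) by nra. assert (HB0 : 0 <= c*nb) by nra.
  assert (P1 : c*na*(c*nb) <= A1*B1) by (apply Rmult_le_compat; lra).
  assert (HA2 : A2*A2 <= (1-c*c)*(na*na)) by nra.
  assert (HB2 : B2*B2 <= (1-c*c)*(nb*nb)) by nra.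
  assert (P2 : -(A2*B2) <= (1-c*c)*na*nb).
  { apply Rsqr_incr_0_var; [unfold Rsqr | apply Rmult_le_pos; [apply Rmult_le_pos|]; nra].
    replace (-(A2*B2)*-(A2*B2)) with ((A2*A2)*(B2*B2)) by ring.
    replace ((1-c*c)*na*nb*((1-c*c)*na*nb)) with (((1-c*c)*(na*na))*((1-c*c)*(nb*nb))) by ring.
    apply Rmult_le_compat; nra. }
  rewrite Eab. nra.
Qed.

Lemma wedge_dot_ge_cos2 (alpha : R) (s u p q : pt) : 0 <= alpha <= PI/2 -> norm u = 1 ->
  wedge alpha s u p -> wedge alpha s u q ->
  cos (2*alpha) * norm (vsub p s) * norm (vsub q s) <= dot (vsub p s) (vsub q s).
Proof.
  intros Ha Hu Hp Hq. pose proof PI_RGT_0.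
  rewrite cos_2a_cos.
  replace (2 * (cos alpha * cos alpha) - 1) with (2 * cos alpha * cos alpha - 1) by ring.
  apply (dot_ge_of_common_axis _ _ _ u).
  - apply dot_self_of_norm_1, Hu.
  - split; [apply cos_ge_0; lra | apply COS_bound].
  - apply wedge_cos_le; auto; lra.
  - apply wedge_cos_le; auto; lra.
Qed.

Lemma dot_normalize (a : pt) : 0 < norm a -> dot (normalize a) (normalize a) = 1.
Proof.
  intro H. pose proof (norm_sqr a) as E. unfold normalize, dot in *; simpl.
  replace (fst a / norm a * (fst a / norm a) + snd a / norm a * (snd a / norm a))
    with ((fst a * fst a + snd a * snd a) / (norm a * norm a)) by (field; lra).
  rewrite <- E. field. lra.
Qed.

Lemma dot_normalize_l (a b : pt) : 0 < norm a -> dot a b = norm a * dot (normalize a) b.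
Proof. intro H. unfold normalize, dot; simpl. field. lra. Qed.

Lemma dot_normalize_r (a b : pt) : dot a (normalize b) = dot a b / norm b.
Proof. unfold normalize, dot, Rdiv; simpl. ring. Qed.

Lemma norm_normalize (a : pt) : 0 < norm a -> norm (normalize a) = 1.
Proof. intro H. unfold norm. rewrite dot_normalize by exact H. apply sqrt_1. Qed.

Lemma unit_bisector_spec (c : R) (v w : pt) : 0 < c -> dot v v = 1 -> dot w w = 1 ->
  2*c*c - 1 <= dot v w ->
  0 < norm (vadd v w) /\ c <= dot v (normalize (vadd v w)) /\ c <= dot w (normalize (vadd v w)).
Proof.
  intros Hc Hv Hw Hd. set (m := vadd v w).
  assert (Hm : dot m m = 2 + 2 * dot v w).
  { unfold m, vadd, dot in *; simpl. nra. }
  assert (Hm2 : norm m * norm m = 2 + 2 * dot v w) by (rewrite norm_sqr; exact Hm).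
  assert (Hd1 : 0 < 1 + dot v w) by nra.
  assert (Hnm : 0 < norm m) by (apply sqrt_lt_R0; lra).
  assert (Hkey : c * norm m <= 1 + dot v w).
  { apply Rsqr_incr_0_var; [unfold Rsqr | lra]. replace (c*norm m*(c*norm m)) with (c*c*(norm m*norm m)) by ring.
    rewrite Hm2. nra. }
  assert (Ev : dot v m = 1 + dot v w) by (rewrite <- Hv; unfold m, vadd, dot; simpl; ring).
  assert (Ew : dot w m = 1 + dot v w)
    by (rewrite <- Hw; unfold m, vadd, dot; simpl; ring).
  repeat split; [exact Hnm | rewrite dot_normalize_r, Ev | rewrite dot_normalize_r, Ew];
    apply (Rmult_le_reg_r (norm m)); try lra; field_simplify; lra.
Qed.

Lemma bisector_spec (c : R) (a b : pt) : 0 < c -> 0 < norm a -> 0 < norm b ->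
  (2*c*c - 1) * norm a * norm b <= dot a b ->
  norm (bisector a b) = 1 /\ c * norm a <= dot a (bisector a b) /\ c * norm b <= dot b (bisector a b).
Proof.
  intros Hc Ha Hb Hab.
  assert (Hd : 2*c*c - 1 <= dot (normalize a) (normalize b)).
  { rewrite (dot_normalize_l a) in Hab by exact Ha.
    replace (dot (normalize a) b) with (dot b (normalize a)) in Hab by (unfold dot; ring).
    rewrite (dot_normalize_l b) in Hab by exact Hb.
    replace (dot (normalize b) (normalize a)) with (dot (normalize a) (normalize b)) in Hab by (unfold dot; ring).
    apply (Rmult_le_reg_r (norm a * norm b)); [nra | nra]. }
  destruct (unit_bisector_spec c (normalize a) (normalize b) Hc (dot_normalize a Ha) (dot_normalize b Hb) Hd)
    as (Hm & Hva & Hvb).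
  unfold bisector. repeat split.
  - apply norm_normalize, Hm.
  - rewrite (dot_normalize_l a) by exact Ha. rewrite (Rmult_comm c). apply Rmult_le_compat_l; lra.
  - rewrite (dot_normalize_l b) by exact Hb. rewrite (Rmult_comm c). apply Rmult_le_compat_l; lra.
Qed.

Lemma cos_angle_le_sin (S C : R) (a b : pt) : 0 < C -> S^2 + C^2 = 1 -> 0 <= dot a b ->
  C * Rabs (cross a b) <= S * dot a b -> C * norm a * norm b <= dot a b.
Proof.
  intros HC HSC Hd H. pose proof (Rabs_pos (cross a b)).
  apply Rsqr_incr_0_var; [unfold Rsqr | exact Hd].
  replace (C * norm a * norm b * (C * norm a * norm b))
    with (C * C * ((norm a * norm a) * (norm b * norm b))) by ring.
  rewrite !norm_sqr, <- lagrange_identity, <- (Rabs_mul_self (cross a b)).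
  assert (C * Rabs (cross a b) * (C * Rabs (cross a b)) <= S * dot a b * (S * dot a b))
    by (apply Rmult_le_compat; nra).
  nra.
Qed.

Lemma sin_le_of_cos_angle (S C : R) (a b : pt) : 0 < C -> 0 < S -> S^2 + C^2 = 1 ->
  C * norm a * norm b <= dot a b ->
  cross a b * cross a b <= S^2 * (dot a a * dot b b) /\ C * Rabs (cross a b) <= S * dot a b.
Proof.
  intros HC HS HSC H.
  pose proof (norm_nonneg a). pose proof (norm_nonneg b). pose proof (lagrange_identity a b) as L.
  assert (Hd : 0 <= dot a b) by (assert (0 <= C * norm a * norm b) by (repeat apply Rmult_le_pos; lra); lra).
  assert (Hsq : C * C * (dot a a * dot b b) <= dot a b * dot a b).
  { rewrite <- !norm_sqr.
    replace (C * C * (norm a * norm a * (norm b * norm b))) with (C * norm a * norm b * (C * norm a * norm b))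
      by ring.
    apply Rmult_le_compat; try lra; repeat apply Rmult_le_pos; lra. }
  split; [nra|].
  apply Rsqr_incr_0_var; [unfold Rsqr | nra].
  replace (C * Rabs (cross a b) * (C * Rabs (cross a b))) with (C * C * (cross a b * cross a b))
    by (rewrite <- (Rabs_mul_self (cross a b)); ring).
  nra.
Qed.

Lemma slope_angle_bounds (S C t s r1 r2 : R) : 0 < C -> 0 < S -> S^2 + C^2 = 1 -> 0 < r1 -> 0 < r2 ->
  C * norm (t*r1, -r1) * norm (s*r2, -r2) <= dot (t*r1, -r1) (s*r2, -r2) ->
  (t-s)^2 <= S^2*(1+t^2)*(1+s^2) /\ C * Rabs (t-s) <= S*(1+t*s).
Proof.
  intros HC HS HSC H1 H2 H.
  destruct (sin_le_of_cos_angle S C _ _ HC HS HSC H) as [Hsin Htan].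
  unfold cross, dot in Hsin, Htan; simpl in Hsin, Htan.
  assert (Hr : 0 < r1 * r2) by nra.
  split.
  - apply (Rmult_le_reg_l ((r1 * r2)^2)); [nra|]. nra.
  - replace (t * r1 * - r2 - - r1 * (s * r2)) with (-(r1 * r2) * (t - s)) in Htan by ring.
    rewrite Rabs_mult, Rabs_Ropp, (Rabs_pos_eq (r1 * r2)) in Htan by lra.
    apply (Rmult_le_reg_l (r1 * r2)); [lra|]. nra.
Qed.

Lemma cone_above_line (S C g h : R) (w : pt) : 0 < h -> 0 < C -> S^2 + C^2 = 1 ->
  S * S * (g * g) < C * C -> C * norm w * norm (g * h, -h) <= dot w (g * h, -h) -> 0 <= snd w ->
  w = (0, 0).
Proof.
  intros Hh HC HSC Hg H Hwz.
  pose proof (norm_nonneg w). pose proof (norm_nonneg (g * h, -h)).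
  assert (Hd : 0 <= dot w (g * h, -h)) by (assert (0 <= C * norm w * norm (g * h, -h)) by (repeat apply Rmult_le_pos; lra); lra).
  assert (Hsq : C * C * (dot w w * dot (g * h, -h) (g * h, -h)) <= dot w (g * h, -h) * dot w (g * h, -h)).
  { rewrite <- !norm_sqr.
    replace (C * C * (norm w * norm w * (norm (g * h, -h) * norm (g * h, -h))))
      with (C * norm w * norm (g * h, -h) * (C * norm w * norm (g * h, -h))) by ring.
    apply Rmult_le_compat; try lra; repeat apply Rmult_le_pos; lra. }
  destruct w as [wx wz]. unfold dot in Hd, Hsq; simpl in *.
  replace (wx * (g * h) + wz * - h) with (h * (g * wx - wz)) in Hd, Hsq by ring.
  assert (HX : 0 <= g * wx - wz) by nra.
  assert (Hsq2 : C * C * (wx * wx + wz * wz) * (1 + g * g) <= (g * wx - wz) * (g * wx - wz)).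
  { apply (Rmult_le_reg_l (h * h)); [nra|]. nra. }
  assert (Hsq3 : (g * wx - wz) * (g * wx - wz) <= (g * wx) * (g * wx)) by (apply Rmult_le_compat; lra).
  assert (Hwx : wx * wx * (C * C - S * S * (g * g)) <= 0).
  { assert (C * C * (wx * wx) * (1 + g * g) <= C * C * (wx * wx + wz * wz) * (1 + g * g)).
    { apply Rmult_le_compat_r; [nra|]. apply Rmult_le_compat_l; nra. }
    replace (C * C) with (1 - S * S) at 1 by nra. nra. }
  assert (Hww : wx * wx <= 0) by (apply (Rmult_le_reg_r (C * C - S * S * (g * g))); nra).
  assert (Hwx0 : wx = 0) by nra.
  subst wx. f_equal. nra.
Qed.

(* Equality holds at [|t| = h (1+S) / C]; this is how the depth factor [2S(1+S)/C^2] is found. *)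
Lemma depth_cos_ge (S C h t : R) : 0 < h -> 0 < C -> 0 < S -> S^2 + C^2 = 1 ->
  C * norm (t, -h) * norm (t, -(2*S*(1+S)/C^2*h) - h) <= dot (t, -h) (t, -(2*S*(1+S)/C^2*h) - h).
Proof.
  intros Hh HC HS HSC. set (c := 2*S*(1+S)/C^2). set (m := h*(1+S)/C).
  assert (Em : h*h*(1+c) = m*m).
  { assert (E : h*h*(1+c) - m*m = h*h*(S^2+C^2-1)/C^2) by (unfold c, m; field; lra).
    rewrite HSC in E. replace (h*h*(1-1)/C^2) with 0 in E by (field; lra). lra. }
  assert (Ecm : C*(c*h) = 2*S*m) by (unfold c, m; field; lra).
  assert (Hm : 0 <= m) by (unfold m; apply Rmult_le_pos; [nra | left; apply Rinv_0_lt_compat; lra]).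
  assert (Hdot : dot (t, -h) (t, -(c*h) - h) = t*t + m*m) by (rewrite <- Em; unfold dot; simpl; ring).
  apply cos_angle_le_sin with (S := S); try assumption; rewrite Hdot; [nra|].
  unfold cross; simpl. replace (t * (- (c * h) - h) - - h * t) with (-(t*(c*h))) by ring.
  rewrite Rabs_Ropp, Rabs_mult, (Rabs_pos_eq (c*h)) by (unfold c; apply Rmult_le_pos; [|lra];
    apply Rmult_le_pos; [nra | left; apply Rinv_0_lt_compat; nra]).
  replace (C * (Rabs t * (c*h))) with (Rabs t * (C*(c*h))) by ring. rewrite Ecm.
  rewrite <- (Rabs_mul_self t).
  assert (0 <= S*((Rabs t - m)*(Rabs t - m))) by (apply Rmult_le_pos; [lra | apply Rle_0_sqr]).
  replace (S * (Rabs t * Rabs t + m * m)) with (Rabs t * (2 * S * m) + S*((Rabs t - m)*(Rabs t - m)))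
    by ring.
  lra.
Qed.

Lemma wedge_bisector_of_cos2 (alpha : R) (s p q : pt) : 0 <= alpha < PI/2 ->
  0 < norm (vsub p s) -> 0 < norm (vsub q s) ->
  cos (2*alpha) * norm (vsub p s) * norm (vsub q s) <= dot (vsub p s) (vsub q s) ->
  norm (bisector (vsub p s) (vsub q s)) = 1 /\
  wedge alpha s (bisector (vsub p s) (vsub q s)) p /\ wedge alpha s (bisector (vsub p s) (vsub q s)) q.
Proof.
  intros Ha Hp Hq H. pose proof PI_RGT_0.
  assert (Hc : 0 < cos alpha) by (apply cos_gt_0; lra).
  rewrite cos_2a_cos in H.
  replace (2 * (cos alpha * cos alpha) - 1) with (2 * cos alpha * cos alpha - 1) in H by ring.
  destruct (bisector_spec _ _ _ Hc Hp Hq H) as (Hu & Hbp & Hbq).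
  pose proof (dot_self_of_norm_1 _ Hu) as Hu1.
  repeat split; [exact Hu | |]; apply wedge_of_cos_le; auto; lra.
Qed.

(* Tangent of the angle between the ray from [s] to [p] and the downward vertical. *)
Definition slope (s p : pt) : R := (fst p - fst s) / (snd s - snd p).

Lemma vsub_slope (s p : pt) : snd p < snd s ->
  vsub p s = (slope s p * (snd s - snd p), -(snd s - snd p)).
Proof. intro H. unfold vsub, slope. f_equal; field; lra. Qed.

Lemma dist_sqr_slopes (h rp rq t1 t2 s1 s2 : R) :
  rp*(t1-t2) = 2*h -> rq*(s1-s2) = 2*h ->
  ((t1*rp - s1*rq)^2 + (rq - rp)^2)*((t1-t2)^2*(s1-s2)^2) =
  4*h^2*((t1*(t2-s2) - t2*(t1-s1))^2 + ((t1-s1)-(t2-s2))^2).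
Proof.
  intros E1 E2.
  assert (A : (t1*rp - s1*rq)*((t1-t2)*(s1-s2)) = 2*h*(t1*(s1-s2) - s1*(t1-t2))).
  { transitivity (t1*(rp*(t1-t2))*(s1-s2) - s1*(rq*(s1-s2))*(t1-t2)); [ring|]. rewrite E1, E2. ring. }
  assert (B : (rq - rp)*((t1-t2)*(s1-s2)) = 2*h*((t1-t2) - (s1-s2))).
  { transitivity ((rq*(s1-s2))*(t1-t2) - (rp*(t1-t2))*(s1-s2)); [ring|]. rewrite E1, E2. ring. }
  transitivity (((t1*rp - s1*rq)*((t1-t2)*(s1-s2)))^2 + ((rq - rp)*((t1-t2)*(s1-s2)))^2); [ring|].
  rewrite A, B. ring.
Qed.

(* [(1+v^2)(u-e)^2 - (1+u^2)(v-e)^2] compares the squared sines of the angles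
   that the directions of slopes [u] and [v] make with the direction of slope [e]. *)
Lemma slope_sin_diff (u v e : R) :
  (1+v^2)*(u-e)^2 - (1+u^2)*(v-e)^2 = (u-v)*((1+u*e)*(v-e) + (1+v*e)*(u-e)).
Proof. ring. Qed.

Lemma slope_sin_mono_above (u v e : R) : v <= u -> e < v -> 0 <= 1 + u*e -> 0 <= 1 + v*e ->
  (1+u^2)*(v-e)^2 <= (1+v^2)*(u-e)^2.
Proof.
  intros. pose proof (slope_sin_diff u v e).
  assert (0 <= (u-v)*((1+u*e)*(v-e) + (1+v*e)*(u-e))).
  { apply Rmult_le_pos; [lra|]. apply Rplus_le_le_0_compat; apply Rmult_le_pos; lra. }
  lra.
Qed.

Lemma slope_sin_mono_below (u v e : R) : u <= v -> v < e -> 0 <= 1 + u*e -> 0 <= 1 + v*e ->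
  (1+u^2)*(v-e)^2 <= (1+v^2)*(u-e)^2.
Proof.
  intros Huv Hve Hu Hv. pose proof (slope_sin_mono_above (-u) (-v) (-e)) as H.
  replace (1 + (-u)*(-e)) with (1 + u*e) in H by ring.
  replace (1 + (-v)*(-e)) with (1 + v*e) in H by ring.
  replace ((1+(-u)^2)*((-v)-(-e))^2) with ((1+u^2)*(v-e)^2) in H by ring.
  replace ((1+(-v)^2)*((-u)-(-e))^2) with ((1+v^2)*(u-e)^2) in H by ring.
  apply H; lra.
Qed.

Lemma slope_sin_antimono_above (u v e : R) : v <= u -> e < v -> 1 + u*e <= 0 -> 1 + v*e <= 0 ->
  (1+v^2)*(u-e)^2 <= (1+u^2)*(v-e)^2.
Proof.
  intros. pose proof (slope_sin_diff u v e).
  assert (0 <= (u-v)*(-(1+u*e)*(v-e) + -(1+v*e)*(u-e))).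
  { apply Rmult_le_pos; [lra|]. apply Rplus_le_le_0_compat; apply Rmult_le_pos; lra. }
  lra.
Qed.

Lemma slope_sin_antimono_below (u v e : R) : u <= v -> v < e -> 1 + u*e <= 0 -> 1 + v*e <= 0 ->
  (1+v^2)*(u-e)^2 <= (1+u^2)*(v-e)^2.
Proof.
  intros Huv Hve Hu Hv. pose proof (slope_sin_antimono_above (-u) (-v) (-e)) as H.
  replace (1 + (-u)*(-e)) with (1 + u*e) in H by ring.
  replace (1 + (-v)*(-e)) with (1 + v*e) in H by ring.
  replace ((1+(-u)^2)*((-v)-(-e))^2) with ((1+u^2)*(v-e)^2) in H by ring.
  replace ((1+(-v)^2)*((-u)-(-e))^2) with ((1+v^2)*(u-e)^2) in H by ring.
  apply H; lra.
Qed.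

Lemma slope_range (S C g t : R) : 0 < S -> 0 < C -> 0 < C + S*g -> 0 < C - S*g ->
  C * Rabs (t - g) <= S * (1 + t*g) ->
  (C*g - S)/(C + S*g) <= t <= (C*g + S)/(C - S*g).
Proof.
  intros HS HC H1 H2 H.
  assert (Ha : C*(t-g) <= S*(1+t*g)) by (pose proof (Rle_abs (t-g)); nra).
  assert (Hb : C*(g-t) <= S*(1+t*g)) by (pose proof (Rle_abs (-(t-g))); rewrite Rabs_Ropp in *; nra).
  split.
  - apply (Rmult_le_reg_r (C + S*g)); [lra|]. field_simplify; [|lra]. nra.
  - apply (Rmult_le_reg_r (C - S*g)); [lra|]. field_simplify; [|lra]. nra.
Qed.

Lemma mul_le_mul_scaled (k x a b A B m : R) : 0 <= k -> 0 <= a -> 0 <= b -> 0 <= m ->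
  x <= k*a*b -> a*m <= A -> b*m <= B -> x*m^2 <= k*A*B.
Proof.
  intros Hk Ha Hb Hm Hx HA HB.
  assert (H1 : x*m^2 <= k*a*b*m^2) by (apply Rmult_le_compat_r; nra).
  assert (H2 : (a*m)*(b*m) <= A*B) by (apply Rmult_le_compat; nra).
  assert (H3 : k*((a*m)*(b*m)) <= k*(A*B)) by (apply Rmult_le_compat_l; lra).
  nra.
Qed.

Lemma constant_172_bound (S y : R) : 0 < S -> S <= 1/5 -> 0 <= y -> y <= 1/4 ->
  (4 + y^2) * ((1+S)^4 + y) <= 4 * (172/100)^2 * (1+S)^2 * (1 - 2*S^2 - S*y)^4.
Proof.
  intros HS HS_le Hy Hy2.
  assert (HA : (4 + y^2) * ((1+S)^4 + y) <= (4 + 1/16) * ((1+S)^4 + 1/4))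
    by (apply Rmult_le_compat; nra).
  assert (HB : (1 - 2*S^2 - S/4)^4 <= (1 - 2*S^2 - S*y)^4) by (apply pow_incr; split; nra).
  assert (HP : 0 < (1+S)^2) by nra.
  replace ((1+S)^4) with ((1+S)^2*(1+S)^2) in * by ring.
  destruct (Rle_lt_dec S (1/10)) as [Hs|Hs].
  - assert (H1 : (1+S)^2 <= 121/100) by (replace (121/100) with ((11/10)^2) by field; apply pow_incr; lra).
    assert (H2 : (9/10)^4 <= (1 - 2*S^2 - S/4)^4) by (apply pow_incr; split; nra).
    assert (H3 : (1+S)^2*(1+S)^2 <= (1+S)^2*(121/100)) by (apply Rmult_le_compat_l; lra).
    nra.
  - assert (H1 : (1+S)^2 <= 144/100) by (replace (144/100) with ((12/10)^2) by field; apply pow_incr; lra).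
    assert (H1' : 121/100 <= (1+S)^2) by (replace (121/100) with ((11/10)^2) by field; apply pow_incr; lra).
    assert (H2 : (87/100)^4 <= (1 - 2*S^2 - S/4)^4) by (apply pow_incr; split; nra).
    assert (H3 : (1+S)^2*(1+S)^2 <= (1+S)^2*(144/100)) by (apply Rmult_le_compat_l; lra).
    assert (H4 : 1/4 * (121/100) <= 1/4 * ((1+S)^2*(1+S)^2) * (100/121))
      by (assert (121/100*(121/100) <= (1+S)^2*(1+S)^2) by (apply Rmult_le_compat; lra); nra).
    nra.
Qed.

(* Normalize [h = 1], put the cameras at [(-1,1)] and [(1,1)] and the target at [(x,0)];
   [t_i] and [s_i] are the slopes [(X - a_i)/(1 - Z)] of the two points [(X,Z)] of the
   intersection seen from camera [i], and [S], [C] stand for [sin 2α], [cos 2α]. *)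
Section SlopeAlgebra.
Variables S C x t1 t2 s1 s2 : R.
Hypothesis HS : 0 < S.
Hypothesis HS_le : S <= 1/5.
Hypothesis HC : 0 < C.
Hypothesis HSC : S^2 + C^2 = 1.
Hypothesis Hx : -1/2 <= x <= 1/2.
Let g1 := 1 + x.
Let g2 := x - 1.
Hypothesis Ht1 : C * Rabs (t1 - g1) <= S * (1 + t1*g1).
Hypothesis Hs1 : C * Rabs (s1 - g1) <= S * (1 + s1*g1).
Hypothesis Ht2 : C * Rabs (t2 - g2) <= S * (1 + t2*g2).
Hypothesis Hs2 : C * Rabs (s2 - g2) <= S * (1 + s2*g2).
Hypothesis Hd1 : (t1-s1)^2 <= S^2*(1+t1^2)*(1+s1^2).
Hypothesis Hd2 : (t2-s2)^2 <= S^2*(1+t2^2)*(1+s2^2).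

Lemma C_gt_9_10 : 9/10 < C.
Proof. nra. Qed.

Let e1 := C + S*g1.
Let f1 := C - S*g1.
Let e2 := C + S*g2.
Let f2 := C - S*g2.
Let L1 := (C*g1 - S)/e1.
Let H1 := (C*g1 + S)/f1.
Let L2 := (C*g2 - S)/e2.
Let H2 := (C*g2 + S)/f2.

Lemma range_denoms_pos : 0 < e1 /\ 0 < f1 /\ 0 < e2 /\ 0 < f2.
Proof. pose proof C_gt_9_10. unfold e1, f1, e2, f2, g1, g2. repeat split; nra. Qed.

Lemma slopes_in_range :
  L1 <= t1 <= H1 /\ L1 <= s1 <= H1 /\ L2 <= t2 <= H2 /\ L2 <= s2 <= H2.
Proof.
  destruct range_denoms_pos as (A & B & D & E).
  repeat split; try apply (slope_range S C g1); try apply (slope_range S C g2); auto.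
Qed.

Lemma range_bounds_sign : 0 < L1 /\ 0 < H1 /\ L2 < 0 /\ H2 < 0.
Proof.
  pose proof C_gt_9_10. destruct range_denoms_pos as (A & B & D & E).
  unfold L1, H1, L2, H2, g1, g2 in *. repeat split.
  - apply Rdiv_lt_0_compat; nra.
  - apply Rdiv_lt_0_compat; nra.
  - apply Rdiv_neg_pos; nra.
  - apply Rdiv_neg_pos; nra.
Qed.

Let Wm := C^2 - S^2 - C*S*x^2.
Let Wp := C^2 - S^2 + C*S*x^2.
Let Pa := 1 + L1^2.
Let Pb := 1 + H2^2.
Let Dm := L1 - H2.
Let K := 1 + L1*H2.

Lemma Wm_pos_le_Wp : 0 < Wm /\ Wm <= Wp.
Proof.
  pose proof C_gt_9_10. unfold Wm, Wp.
  assert (Hy : 0 <= x^2 <= 1/4) by nra.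
  assert (Hc1 : C <= 1) by nra.
  assert (0 <= C*S*x^2 <= C*S/4)
    by (split; [apply Rmult_le_pos; nra | apply Rmult_le_compat_l; nra]).
  split; nra.
Qed.

Lemma Pa_closed : Pa = (S^2+C^2)*(1+g1^2)/e1^2.
Proof. destruct range_denoms_pos as (A&B&D&E). unfold Pa, L1, e1, g1 in *. field; lra. Qed.
Lemma Pb_closed : Pb = (S^2+C^2)*(1+g2^2)/f2^2.
Proof. destruct range_denoms_pos as (A&B&D&E). unfold Pb, H2, f2, g2 in *. field; lra. Qed.
Lemma Dm_closed : Dm = 2*Wm/(e1*f2).
Proof. destruct range_denoms_pos as (A&B&D&E). unfold Dm, Wm, L1, H2, e1, f2, g1, g2 in *. field; lra. Qed.
Lemma L1_add_H2_closed : L1 + H2 = (S^2+C^2)*(2*x)/(e1*f2).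
Proof. destruct range_denoms_pos as (A&B&D&E). unfold L1, H2, e1, f2, g1, g2 in *. field; lra. Qed.
Lemma K_closed : K = ((C^2-S^2)*x^2 + 4*C*S)/(e1*f2).
Proof. destruct range_denoms_pos as (A&B&D&E). unfold K, L1, H2, e1, f2, g1, g2 in *. field; lra. Qed.
Lemma H1_H2_closed : 1 + H1*H2 = (S^2+C^2)*x^2/(f1*f2).
Proof. destruct range_denoms_pos as (A&B&D&E). unfold H1, H2, f1, f2, g1, g2 in *. field; lra. Qed.
Lemma L1_L2_closed : 1 + L1*L2 = (S^2+C^2)*x^2/(e1*e2).
Proof. destruct range_denoms_pos as (A&B&D&E). unfold L1, L2, e1, e2, g1, g2 in *. field; lra. Qed.
Lemma H1_sq_closed : 1 + H1^2 = (S^2+C^2)*(1+g1^2)/f1^2.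
Proof. destruct range_denoms_pos as (A&B&D&E). unfold H1, f1, g1 in *. field; lra. Qed.
Lemma L2_sq_closed : 1 + L2^2 = (S^2+C^2)*(1+g2^2)/e2^2.
Proof. destruct range_denoms_pos as (A&B&D&E). unfold L2, e2, g2 in *. field; lra. Qed.
Lemma H1_sub_L2_closed : H1 - L2 = 2*Wp/(f1*e2).
Proof. destruct range_denoms_pos as (A&B&D&E). unfold Wp, H1, L2, f1, e2, g1, g2 in *. field; lra. Qed.

Lemma range_bounds_facts : 0 < Dm /\ 0 < K /\ 0 <= 1 + H1*H2 /\ 0 <= 1 + L1*L2.
Proof.
  destruct range_denoms_pos as (A&B&D&E). destruct Wm_pos_le_Wp as [W1 W2]. pose proof C_gt_9_10.
  assert (Hy : 0 <= x^2) by nra.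
  assert (Hcs : 0 < C^2 - S^2) by nra.
  assert (0 <= (C^2-S^2)*x^2) by (apply Rmult_le_pos; lra).
  assert (0 < C*S) by nra.
  rewrite Dm_closed, K_closed, H1_H2_closed, L1_L2_closed. repeat split.
  - apply Rdiv_lt_0_compat; nra.
  - apply Rdiv_lt_0_compat; nra.
  - unfold Rdiv; apply Rmult_le_pos; [nra | left; apply Rinv_0_lt_compat; nra].
  - unfold Rdiv; apply Rmult_le_pos; [nra | left; apply Rinv_0_lt_compat; nra].
Qed.

Lemma slope_gap_l (a b : R) : L1 <= a <= H1 -> L2 <= b <= H2 ->
  (1+a^2)*Dm^2 <= Pa*(a-b)^2.
Proof.
  intros Ha Hb. destruct range_bounds_sign as (G1&G2&G3&G4).
  destruct range_bounds_facts as (B1&B2&B3&B4). unfold Dm, K, Pa in *.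
  assert ((1+a^2)*(L1-H2)^2 <= (1+L1^2)*(a-H2)^2)
    by (apply slope_sin_mono_above; try lra; nra).
  assert ((a-H2)^2 <= (a-b)^2) by nra.
  nra.
Qed.

Lemma slope_gap_from_L1 (b : R) : L2 <= b <= H2 -> (1+b^2)*Dm^2 <= Pb*(L1-b)^2.
Proof.
  intros Hb. destruct range_bounds_sign as (G1&G2&G3&G4).
  destruct range_bounds_facts as (B1&B2&B3&B4). unfold Dm, K, Pb in *.
  replace ((L1-H2)^2) with ((H2-L1)^2) by ring. replace ((L1-b)^2) with ((b-L1)^2) by ring.
  apply slope_sin_mono_below; try lra; nra.
Qed.

Lemma slope_gap_r (a b : R) : L1 <= a <= H1 -> L2 <= b <= H2 ->
  (1+b^2)*Dm^2 <= Pb*(a-b)^2.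
Proof.
  intros Ha Hb. destruct range_bounds_facts as (B1&B2&B3&B4).
  pose proof (slope_gap_from_L1 b Hb). unfold Dm in *.
  assert ((L1-b)^2 <= (a-b)^2) by nra.
  assert (0 <= Pb) by (unfold Pb; nra). nra.
Qed.

Lemma slope_gap_extreme : (1+H1^2)*(1+L2^2)*Dm^2 <= Pa*Pb*(H1-L2)^2.
Proof.
  destruct range_denoms_pos as (A&B&D&E). destruct Wm_pos_le_Wp as [W1 W2].
  rewrite H1_sq_closed, L2_sq_closed, Pa_closed, Pb_closed, Dm_closed, H1_sub_L2_closed.
  set (Q := (S^2+C^2)^2*(1+g1^2)*(1+g2^2)*4/(e1^2*f2^2*f1^2*e2^2)).
  assert (HQ : 0 <= Q).
  { unfold Q, Rdiv. apply Rmult_le_pos.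
    - assert (0 <= (S^2+C^2)^2) by nra. assert (0 <= 1+g1^2) by nra. assert (0 <= 1+g2^2) by nra.
      repeat apply Rmult_le_pos; lra.
    - left. apply Rinv_0_lt_compat. repeat apply Rmult_lt_0_compat; nra. }
  replace ((S^2+C^2)*(1+g1^2)/f1^2 * ((S^2+C^2)*(1+g2^2)/e2^2) * (2*Wm/(e1*f2))^2)
    with (Q * Wm^2) by (unfold Q; field; lra).
  replace ((S^2+C^2)*(1+g1^2)/e1^2 * ((S^2+C^2)*(1+g2^2)/f2^2) * (2*Wp/(f1*e2))^2)
    with (Q * Wp^2) by (unfold Q; field; lra).
  apply Rmult_le_compat_l; [lra|]. nra.
Qed.

Lemma slope_gap_obtuse (a b : R) : L1 <= a <= H1 -> L2 <= b <= H2 -> 1 + a*b < 0 ->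
  (1+a^2)*(1+b^2)*Dm^2 <= Pa*Pb*(a-b)^2.
Proof.
  intros Ha Hb Hab. destruct range_bounds_sign as (G1&G2&G3&G4).
  destruct range_bounds_facts as (B1&B2&B3&B4).
  assert (Ia : (1+a^2)*(H1-b)^2 <= (1+H1^2)*(a-b)^2)
    by (apply slope_sin_antimono_above; try lra; nra).
  assert (Ib : (1+b^2)*(H1-L2)^2 <= (1+L2^2)*(H1-b)^2).
  { replace ((H1-L2)^2) with ((L2-H1)^2) by ring. replace ((H1-b)^2) with ((b-H1)^2) by ring.
    apply slope_sin_antimono_below; try lra; nra. }
  assert (0 <= 1 + a^2) by nra. assert (0 <= 1 + b^2) by nra.
  assert (0 <= 1 + H1^2) by nra. assert (0 <= 1 + L2^2) by nra.
  assert (Iab : (1+a^2)*(1+b^2)*(H1-L2)^2 <= (1+L2^2)*(1+H1^2)*(a-b)^2).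
  { assert ((1+a^2)*((1+b^2)*(H1-L2)^2) <= (1+a^2)*((1+L2^2)*(H1-b)^2))
      by (apply Rmult_le_compat_l; lra).
    assert ((1+L2^2)*((1+a^2)*(H1-b)^2) <= (1+L2^2)*((1+H1^2)*(a-b)^2))
      by (apply Rmult_le_compat_l; lra).
    nra. }
  pose proof slope_gap_extreme as Iext.
  assert (Hp : 0 < (H1-L2)^2) by nra.
  apply (Rmult_le_reg_r ((H1-L2)^2)); [lra|].
  assert ((1+a^2)*(1+b^2)*(H1-L2)^2*Dm^2 <= (1+L2^2)*(1+H1^2)*(a-b)^2*Dm^2)
    by (apply Rmult_le_compat_r; nra).
  assert ((1+H1^2)*(1+L2^2)*Dm^2*(a-b)^2 <= Pa*Pb*(H1-L2)^2*(a-b)^2)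
    by (apply Rmult_le_compat_r; nra).
  nra.
Qed.

Lemma slope_gap (a b : R) : L1 <= a <= H1 -> L2 <= b <= H2 ->
  (1+a^2)*(1+b^2)*Dm^2 <= Pa*Pb*(a-b)^2.
Proof.
  intros Ha Hb.
  destruct (Rlt_or_le (1 + a*b) 0) as [Hab|Hab]; [exact (slope_gap_obtuse a b Ha Hb Hab)|].
  destruct range_bounds_sign as (G1&G2&G3&G4). destruct range_bounds_facts as (B1&B2&B3&B4).
  assert (Ia : (1+a^2)*(L1-b)^2 <= Pa*(a-b)^2)
    by (unfold Pa; apply slope_sin_mono_above; try lra; nra).
  pose proof (slope_gap_from_L1 b Hb) as Ib.
  assert (0 <= 1 + a^2) by nra. assert (0 <= Pb) by (unfold Pb; nra).
  assert ((1+a^2)*((1+b^2)*Dm^2) <= (1+a^2)*(Pb*(L1-b)^2)) by (apply Rmult_le_compat_l; lra).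
  assert (Pb*((1+a^2)*(L1-b)^2) <= Pb*(Pa*(a-b)^2)) by (apply Rmult_le_compat_l; lra).
  nra.
Qed.

Lemma range_product_bound : C^4 * (Pa*Pb*(Pa+Pb+2*K)) <= (172/100)^2*(1+S)^2*Dm^4.
Proof.
  destruct range_denoms_pos as (A&B&D&E). destruct Wm_pos_le_Wp as [W1 W2]. pose proof C_gt_9_10.
  assert (Hsum : Pa+Pb+2*K = 4 + (L1+H2)^2) by (unfold Pa, Pb, K; ring).
  rewrite Hsum, Pa_closed, Pb_closed, L1_add_H2_closed, Dm_closed, HSC.
  set (E0 := e1*f2). assert (HE : 0 < E0) by (unfold E0; nra).
  assert (Hg : (1+g1^2)*(1+g2^2) = 4 + (x^2)^2) by (unfold g1, g2; ring).
  replace (C^4 * (1*(1+g1^2)/e1^2 * (1*(1+g2^2)/f2^2) * (4 + (1*(2*x)/E0)^2)))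
    with (C^4 * (4 + (x^2)^2) * (4*E0^2 + 4*x^2) / E0^4)
    by (rewrite <- Hg; unfold E0; field; lra).
  replace ((172/100)^2 * (1+S)^2 * (2*Wm/E0)^4)
    with ((172/100)^2 * (1+S)^2 * (16*Wm^4) / E0^4) by (field; lra).
  unfold Rdiv. apply Rmult_le_compat_r; [left; apply Rinv_0_lt_compat; apply pow_lt; lra|].
  set (y := x^2).
  assert (Hy : 0 <= y <= 1/4) by (unfold y; nra).
  assert (HC1 : C <= 1) by nra.
  assert (HE1 : E0 <= (1+S)^2) by (unfold E0, e1, f2, g1, g2; nra).
  assert (HE2 : E0^2 <= (1+S)^4)
    by (replace ((1+S)^4) with (((1+S)^2)^2) by ring; apply pow_incr; lra).
  assert (HW : 1 - 2*S^2 - S*y <= Wm).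
  { unfold Wm. fold y. assert (C*S*y <= S*y) by (apply Rmult_le_compat_r; nra). nra. }
  assert (HW4 : (1 - 2*S^2 - S*y)^4 <= Wm^4) by (apply pow_incr; split; nra).
  assert (HC4 : C^4 <= 1) by (replace 1 with (1^4) by ring; apply pow_incr; lra).
  pose proof (constant_172_bound S y HS HS_le (proj1 Hy) (proj2 Hy)) as Hf.
  assert (0 <= 4 + y^2) by nra.
  assert (C^4 * ((4 + y^2) * (4*E0^2 + 4*y)) <= 1 * ((4 + y^2) * (4*E0^2 + 4*y)))
    by (apply Rmult_le_compat_r; nra).
  assert (4 * (172/100)^2 * (1+S)^2 * (1 - 2*S^2 - S*y)^4 <= 4 * (172/100)^2 * (1+S)^2 * Wm^4)
    by (apply Rmult_le_compat_l; [nra|lra]).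
  nra.
Qed.

Lemma cos_term_bound : (1+t1*t2)^2*Dm^2 <= K^2*(t1-t2)^2.
Proof.
  destruct slopes_in_range as (R1&R2&R3&R4).
  pose proof (slope_gap t1 t2 R1 R3).
  replace ((1+t1*t2)^2) with ((1+t1^2)*(1+t2^2) - (t1-t2)^2) by ring.
  replace (K^2) with (Pa*Pb - Dm^2) by (unfold K, Pa, Pb, Dm; ring).
  nra.
Qed.

Lemma cross_term_sqr_bound :
  ((1+t1*t2)*(t1-s1)*(t2-s2)*Dm^4)^2 <= (S^2*K*Pa*Pb*(t1-t2)^2*(s1-s2)^2)^2.
Proof.
  destruct slopes_in_range as (R1&R2&R3&R4). destruct range_bounds_facts as (B1&B2&B3&B4).
  assert (HPa : 0 < Pa) by (unfold Pa; nra). assert (HPb : 0 < Pb) by (unfold Pb; nra).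
  assert (Hdd : (t1-s1)^2*(t2-s2)^2 <= S^4*((1+t1^2)*(1+s1^2))*((1+t2^2)*(1+s2^2))).
  { replace (S^4*((1+t1^2)*(1+s1^2))*((1+t2^2)*(1+s2^2)))
      with ((S^2*(1+t1^2)*(1+s1^2))*(S^2*(1+t2^2)*(1+s2^2))) by ring.
    apply Rmult_le_compat; [apply pow2_ge_0 | apply pow2_ge_0 | exact Hd1 | exact Hd2]. }
  assert (Hgaps : ((1+t1^2)*(1+t2^2)*Dm^2)*(((1+s1^2)*Dm^2)*((1+s2^2)*Dm^2))
                  <= (Pa*Pb*(t1-t2)^2)*((Pa*(s1-s2)^2)*(Pb*(s1-s2)^2))).
  { pose proof (slope_gap t1 t2 R1 R3).
    pose proof (slope_gap_l s1 s2 R2 R4). pose proof (slope_gap_r s1 s2 R2 R4).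
    apply Rmult_le_compat; try (apply Rmult_le_pos; nra); try lra.
    apply Rmult_le_compat; nra. }
  assert (E1 : ((1+t1*t2)^2*Dm^2)*((t1-s1)^2*(t2-s2)^2)*Dm^6
               <= (K^2*(t1-t2)^2)*(S^4*((1+t1^2)*(1+s1^2))*((1+t2^2)*(1+s2^2)))*Dm^6).
  { apply Rmult_le_compat_r; [apply pow_le; lra|].
    apply Rmult_le_compat; try (apply Rmult_le_pos; apply pow2_ge_0); [exact cos_term_bound | exact Hdd]. }
  replace ((K^2*(t1-t2)^2)*(S^4*((1+t1^2)*(1+s1^2))*((1+t2^2)*(1+s2^2)))*Dm^6)
    with ((K^2*(t1-t2)^2*S^4)*(((1+t1^2)*(1+t2^2)*Dm^2)*(((1+s1^2)*Dm^2)*((1+s2^2)*Dm^2))))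
    in E1 by ring.
  assert (E2 : (K^2*(t1-t2)^2*S^4)*(((1+t1^2)*(1+t2^2)*Dm^2)*(((1+s1^2)*Dm^2)*((1+s2^2)*Dm^2)))
               <= (K^2*(t1-t2)^2*S^4)*((Pa*Pb*(t1-t2)^2)*((Pa*(s1-s2)^2)*(Pb*(s1-s2)^2))))
    by (apply Rmult_le_compat_l; [|lra];
        apply Rmult_le_pos; [apply Rmult_le_pos; apply pow2_ge_0 | apply pow_le; lra]).
  replace (((1+t1*t2)*(t1-s1)*(t2-s2)*Dm^4)^2)
    with (((1+t1*t2)^2*Dm^2)*((t1-s1)^2*(t2-s2)^2)*Dm^6) by ring.
  replace ((S^2*K*Pa*Pb*(t1-t2)^2*(s1-s2)^2)^2)
    with ((K^2*(t1-t2)^2*S^4)*((Pa*Pb*(t1-t2)^2)*((Pa*(s1-s2)^2)*(Pb*(s1-s2)^2)))) by ring.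
  lra.
Qed.

Lemma cross_term_bound :
  -(2*(1+t1*t2)*(t1-s1)*(t2-s2))*Dm^4 <= 2*(S^2*K*Pa*Pb*(t1-t2)^2*(s1-s2)^2).
Proof.
  destruct range_bounds_facts as (B1&B2&B3&B4).
  assert (HPa : 0 < Pa) by (unfold Pa; nra). assert (HPb : 0 < Pb) by (unfold Pb; nra).
  set (B := S^2*K*Pa*Pb*(t1-t2)^2*(s1-s2)^2).
  assert (HB : 0 <= B).
  { unfold B. assert (0 <= S^2*K) by (apply Rmult_le_pos; [apply pow2_ge_0 | lra]).
    assert (0 <= S^2*K*Pa*Pb) by (apply Rmult_le_pos; [apply Rmult_le_pos|]; lra).
    apply Rmult_le_pos; [apply Rmult_le_pos|]; [lra | apply pow2_ge_0 | apply pow2_ge_0]. }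
  assert (Habs : Rabs ((1+t1*t2)*(t1-s1)*(t2-s2)*Dm^4) <= B).
  { rewrite <- (Rabs_pos_eq B HB). apply Rsqr_le_abs_0. rewrite !Rsqr_pow2.
    exact cross_term_sqr_bound. }
  pose proof (Rle_abs (-((1+t1*t2)*(t1-s1)*(t2-s2)*Dm^4))). rewrite Rabs_Ropp in *. nra.
Qed.

Lemma slopes_distance_bound :
  C^4 * ((t1*(t2-s2) - t2*(t1-s1))^2 + ((t1-s1)-(t2-s2))^2)
  <= (172/100)^2*(1+S)^2*S^2*(t1-t2)^2*(s1-s2)^2.
Proof.
  destruct slopes_in_range as (R1&R2&R3&R4). destruct range_bounds_facts as (B1&B2&B3&B4).
  assert (HPa : 0 < Pa) by (unfold Pa; nra). assert (HPb : 0 < Pb) by (unfold Pb; nra).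
  assert (T1 : (1+t2^2)*(t1-s1)^2*(Dm^2)^2 <= S^2*(Pa*Pb*(t1-t2)^2)*(Pa*(s1-s2)^2)).
  { apply (mul_le_mul_scaled _ _ ((1+t1^2)*(1+t2^2)) (1+s1^2)); try nra.
    - apply slope_gap; assumption.
    - apply slope_gap_l; assumption. }
  assert (T2 : (1+t1^2)*(t2-s2)^2*(Dm^2)^2 <= S^2*(Pa*Pb*(t1-t2)^2)*(Pb*(s1-s2)^2)).
  { apply (mul_le_mul_scaled _ _ ((1+t1^2)*(1+t2^2)) (1+s2^2)); try nra.
    - apply slope_gap; assumption.
    - apply slope_gap_r; assumption. }
  pose proof cross_term_bound as T3.
  assert (Hsum : ((t1*(t2-s2) - t2*(t1-s1))^2 + ((t1-s1)-(t2-s2))^2)*Dm^4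
                 <= S^2*(t1-t2)^2*(s1-s2)^2*(Pa*Pb*(Pa+Pb+2*K))).
  { replace ((t1*(t2-s2) - t2*(t1-s1))^2 + ((t1-s1)-(t2-s2))^2)
      with ((1+t2^2)*(t1-s1)^2 + (1+t1^2)*(t2-s2)^2 - 2*(1+t1*t2)*(t1-s1)*(t2-s2)) by ring.
    replace ((Dm^2)^2) with (Dm^4) in T1, T2 by ring.
    nra. }
  pose proof range_product_bound as HN.
  assert (HD4 : 0 < Dm^4) by (apply pow_lt; lra).
  apply (Rmult_le_reg_r (Dm^4)); [lra|].
  assert (0 <= S^2*(t1-t2)^2*(s1-s2)^2)
    by (apply Rmult_le_pos; [apply Rmult_le_pos|]; apply pow2_ge_0).
  assert (C^4*(((t1*(t2-s2) - t2*(t1-s1))^2 + ((t1-s1)-(t2-s2))^2)*Dm^4)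
          <= C^4*(S^2*(t1-t2)^2*(s1-s2)^2*(Pa*Pb*(Pa+Pb+2*K))))
    by (apply Rmult_le_compat_l; [apply pow_le; lra | lra]).
  assert ((S^2*(t1-t2)^2*(s1-s2)^2)*(C^4*(Pa*Pb*(Pa+Pb+2*K)))
          <= (S^2*(t1-t2)^2*(s1-s2)^2)*((172/100)^2*(1+S)^2*Dm^4))
    by (apply Rmult_le_compat_l; lra).
  nra.
Qed.
End SlopeAlgebra.

Definition eps_factor (alpha : R) : R :=
  2 * sin (2*alpha) * (1 + sin (2*alpha)) / cos (2*alpha) ^ 2.

Lemma dist_le_of_slopes (a h M t1 t2 u1 u2 : R) (p q : pt) : 0 < h -> snd p < h -> snd q < h ->
  0 <= M -> t1 = slope (a, h) p -> t2 = slope (a + 2*h, h) p ->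
  u1 = slope (a, h) q -> u2 = slope (a + 2*h, h) q ->
  4 * h^2 * ((t1*(t2-u2) - t2*(t1-u1))^2 + ((t1-u1)-(t2-u2))^2) <= M^2 * (t1-t2)^2 * (u1-u2)^2 ->
  Defs.dist p q <= M.
Proof.
  intros Hh Hp Hq HM Et1 Et2 Eu1 Eu2 H.
  destruct p as [px pz], q as [qx qz]; simpl in Hp, Hq.
  set (rp := h - pz). set (rq := h - qz).
  assert (Ep : rp*(t1-t2) = 2*h) by (subst; unfold rp, slope; simpl; field; lra).
  assert (Eq : rq*(u1-u2) = 2*h) by (subst; unfold rq, slope; simpl; field; lra).
  assert (HD : 0 < (t1-t2)^2*(u1-u2)^2).
  { assert (t1 - t2 <> 0) by (intro E; rewrite E, Rmult_0_r in Ep; lra).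
    assert (u1 - u2 <> 0) by (intro E; rewrite E, Rmult_0_r in Eq; lra).
    rewrite <- !Rsqr_pow2. apply Rmult_lt_0_compat; apply Rsqr_pos_lt; assumption. }
  assert (Hd2 : (t1*rp - u1*rq)^2 + (rq - rp)^2 <= M^2).
  { apply (Rmult_le_reg_r ((t1-t2)^2*(u1-u2)^2)); [exact HD|].
    rewrite (dist_sqr_slopes h rp rq t1 t2 u1 u2 Ep Eq). lra. }
  unfold Defs.dist, norm, dot; simpl.
  replace ((px - qx) * (px - qx) + (pz - qz) * (pz - qz)) with ((t1*rp - u1*rq)^2 + (rq - rp)^2)
    by (subst; unfold rp, rq, slope; simpl; field; lra).
  rewrite <- (sqrt_pow2 M HM). apply sqrt_le_1_alt. exact Hd2.
Qed.

Lemma slope_shift (a h : R) (g : pt) : snd g < h ->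
  slope (a + 2*h, h) g = slope (a, h) g - 2 * h / (h - snd g).
Proof. intro H. unfold slope; simpl. field. lra. Qed.

Section SmallAngle.
Variable alpha : R.
Hypothesis Ha0 : 0 < alpha.
Hypothesis Ha1 : alpha <= 1/10.

Lemma alpha_lt_PI_2 : 0 <= alpha < PI/2.
Proof. pose proof PI2_3_2. lra. Qed.

Lemma sin_2a_pos : 0 < sin (2*alpha).
Proof. pose proof PI2_3_2. apply sin_gt_0; lra. Qed.

Lemma sin_2a_le : sin (2*alpha) <= 1/5.
Proof. pose proof (sin_lt_x (2*alpha)). lra. Qed.

Lemma cos_2a_pos : 0 < cos (2*alpha).
Proof. pose proof PI2_3_2. apply cos_gt_0; lra. Qed.

Lemma sin_2a_sqr_add : sin (2*alpha) ^ 2 + cos (2*alpha) ^ 2 = 1.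
Proof. pose proof (sin2_cos2 (2*alpha)). unfold Rsqr in *. lra. Qed.

Lemma eps_factor_pos : 0 < eps_factor alpha.
Proof.
  pose proof sin_2a_pos. pose proof cos_2a_pos. unfold eps_factor.
  apply Rdiv_lt_0_compat; [nra | apply pow_lt; lra].
Qed.

Lemma eps_viewline_ge (h E : R) (g : pt) : 0 < h -> ground g ->
  eps_le alpha g (viewline h) E -> eps_factor alpha * h <= E.
Proof.
  intros Hh Hg HE. pose proof eps_factor_pos as Hc.
  destruct g as [gx gz]. unfold ground in Hg. simpl in Hg. subst gz.
  set (p0 := (gx, -(eps_factor alpha * h))).
  assert (Hw : forall s, viewline h s ->
    norm (bisector (vsub (gx, 0) s) (vsub p0 s)) = 1 /\
    wedge alpha s (bisector (vsub (gx, 0) s) (vsub p0 s)) (gx, 0) /\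
    wedge alpha s (bisector (vsub (gx, 0) s) (vsub p0 s)) p0).
  { intros [sx sz] Hs. unfold viewline in Hs. simpl in Hs. subst sz.
    assert (0 < eps_factor alpha * h) by nra.
    apply wedge_bisector_of_cos2; [exact alpha_lt_PI_2 | apply norm_pos; simpl; lra
                                  | apply norm_pos; simpl; lra |].
    unfold vsub, p0, eps_factor; simpl. replace (0 - h) with (-h) by ring.
    apply depth_cos_ge; [lra | exact cos_2a_pos | exact sin_2a_pos | exact sin_2a_sqr_add]. }
  pose proof (HE (fun s => bisector (vsub (gx, 0) s) (vsub p0 s))
                 (fun s Hs => conj (proj1 (Hw s Hs)) (proj1 (proj2 (Hw s Hs))))
                 (gx, 0) p0 (fun s Hs => proj1 (proj2 (Hw s Hs))) (fun s Hs => proj2 (proj2 (Hw s Hs))))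
    as Hd.
  unfold Defs.dist, norm, dot, p0 in Hd. simpl in Hd.
  replace ((gx - gx) * (gx - gx) + (0 - - (eps_factor alpha * h)) * (0 - - (eps_factor alpha * h)))
    with ((eps_factor alpha * h) * (eps_factor alpha * h)) in Hd by ring.
  rewrite sqrt_square in Hd by nra. exact Hd.
Qed.

Lemma wedge_below_camera (s g u p : pt) : snd g < snd s ->
  sin (2*alpha) * sin (2*alpha) * (slope s g * slope s g) < cos (2*alpha) * cos (2*alpha) ->
  admissible alpha g s u -> wedge alpha s u p -> p = s \/ snd p < snd s.
Proof.
  intros Hgs Hg [Hu Hug] Hp.
  destruct (Rlt_or_le (snd p) (snd s)) as [Hl|Hl]; [right; exact Hl | left].
  pose proof (wedge_dot_ge_cos2 alpha s u p g ltac:(pose proof alpha_lt_PI_2; lra) Hu Hp Hug) as H.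
  rewrite (vsub_slope s g Hgs) in H.
  assert (E : vsub p s = (0, 0)).
  { apply (cone_above_line (sin (2*alpha)) (cos (2*alpha)) (slope s g) (snd s - snd g));
      [lra | exact cos_2a_pos | exact sin_2a_sqr_add | exact Hg | exact H | unfold vsub; simpl; lra]. }
  unfold vsub in E. injection E as E1 E2. destruct p, s; simpl in *. f_equal; lra.
Qed.

Lemma wedge_slope_bounds (s g u p q : pt) :
  snd g < snd s -> snd p < snd s -> snd q < snd s ->
  admissible alpha g s u -> wedge alpha s u p -> wedge alpha s u q ->
  (slope s p - slope s q)^2 <= sin (2*alpha) ^ 2 * (1 + slope s p ^ 2) * (1 + slope s q ^ 2) /\
  cos (2*alpha) * Rabs (slope s p - slope s g) <= sin (2*alpha) * (1 + slope s p * slope s g).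
Proof.
  intros Hg Hp Hq [Hu Hug] Wp Wq. pose proof alpha_lt_PI_2.
  pose proof (wedge_dot_ge_cos2 alpha s u p q ltac:(lra) Hu Wp Wq) as Hpq.
  pose proof (wedge_dot_ge_cos2 alpha s u p g ltac:(lra) Hu Wp Hug) as Hpg.
  rewrite (vsub_slope s p Hp), (vsub_slope s q Hq) in Hpq.
  rewrite (vsub_slope s p Hp), (vsub_slope s g Hg) in Hpg.
  split.
  - refine (proj1 (slope_angle_bounds _ _ _ _ _ _ cos_2a_pos sin_2a_pos sin_2a_sqr_add _ _ Hpq)); lra.
  - refine (proj2 (slope_angle_bounds _ _ _ _ _ _ cos_2a_pos sin_2a_pos sin_2a_sqr_add _ _ Hpg)); lra.
Qed.

Lemma grid_pair_below (a h : R) (g u1 u2 p : pt) : 0 < h -> ground g ->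
  1/2 <= slope (a, h) g <= 3/2 ->
  admissible alpha g (a, h) u1 -> admissible alpha g (a + 2*h, h) u2 ->
  wedge alpha (a, h) u1 p -> wedge alpha (a + 2*h, h) u2 p -> snd p < h.
Proof.
  intros Hh Hg Hsl Ad1 Ad2 W1 W2. unfold ground in Hg.
  pose proof sin_2a_pos. pose proof sin_2a_le. pose proof cos_2a_pos. pose proof sin_2a_sqr_add.
  assert (Hsmall : forall y, -3/2 <= y <= 3/2 ->
    sin (2*alpha) * sin (2*alpha) * (y * y) < cos (2*alpha) * cos (2*alpha)).
  { intros y Hy. assert (y * y <= 9/4) by nra. assert (sin (2*alpha) * sin (2*alpha) <= 1/25) by nra.
    nra. }
  assert (E2 : slope (a + 2*h, h) g = slope (a, h) g - 2)
    by (rewrite slope_shift by lra; rewrite Hg; field; lra).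
  destruct (wedge_below_camera (a, h) g u1 p ltac:(simpl; lra) ltac:(apply Hsmall; lra) Ad1 W1)
    as [E|]; [|assumption].
  destruct (wedge_below_camera (a + 2*h, h) g u2 p ltac:(simpl; lra)
              ltac:(rewrite E2; apply Hsmall; lra) Ad2 W2) as [E'|]; [|assumption].
  rewrite E in E'. injection E' as E'. lra.
Qed.

Lemma grid_pair_dist_le (a h : R) (g u1 u2 p q : pt) : 0 < h -> ground g ->
  1/2 <= slope (a, h) g <= 3/2 ->
  admissible alpha g (a, h) u1 -> admissible alpha g (a + 2*h, h) u2 ->
  wedge alpha (a, h) u1 p -> wedge alpha (a + 2*h, h) u2 p ->
  wedge alpha (a, h) u1 q -> wedge alpha (a + 2*h, h) u2 q ->
  Defs.dist p q <= 172/100 * (eps_factor alpha * h).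
Proof.
  intros Hh Hg Hsl Ad1 Ad2 Wp1 Wp2 Wq1 Wq2. pose proof Hg as Hg0. unfold ground in Hg0.
  pose proof sin_2a_pos as HS. pose proof sin_2a_le. pose proof cos_2a_pos as HC.
  pose proof (grid_pair_below a h g u1 u2 p Hh Hg Hsl Ad1 Ad2 Wp1 Wp2) as Hp.
  pose proof (grid_pair_below a h g u1 u2 q Hh Hg Hsl Ad1 Ad2 Wq1 Wq2) as Hq.
  set (s1 := (a, h)) in *. set (s2 := (a + 2*h, h)) in *.
  assert (Hgs : snd g < h) by lra.
  destruct (wedge_slope_bounds s1 g u1 p q Hgs Hp Hq Ad1 Wp1 Wq1) as [Sp1 Tp1].
  destruct (wedge_slope_bounds s1 g u1 q p Hgs Hq Hp Ad1 Wq1 Wp1) as [_ Tq1].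
  destruct (wedge_slope_bounds s2 g u2 p q Hgs Hp Hq Ad2 Wp2 Wq2) as [Sp2 Tp2].
  destruct (wedge_slope_bounds s2 g u2 q p Hgs Hq Hp Ad2 Wq2 Wp2) as [_ Tq2].
  set (x := slope s1 g - 1) in *.
  replace (slope s1 g) with (1 + x) in Tp1, Tq1 by (unfold x; ring).
  replace (slope s2 g) with (x - 1) in Tp2, Tq2
    by (unfold x, s1, s2; rewrite slope_shift, Hg0 by lra; field; lra).
  pose proof (slopes_distance_bound _ _ x _ _ _ _ HS ltac:(assumption) HC sin_2a_sqr_add
                ltac:(unfold x; lra) Tp1 Tq1 Tp2 Tq2 Sp1 Sp2) as Hcore.
  apply (dist_le_of_slopes a h _ (slope s1 p) (slope s2 p) (slope s1 q) (slope s2 q) p q); auto.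
  - pose proof eps_factor_pos. nra.
  - unfold eps_factor. set (S := sin (2*alpha)) in *. set (C := cos (2*alpha)) in *.
    apply (Rmult_le_reg_r (C^4)); [apply pow_lt; lra|].
    set (N := (slope s1 p * (slope s2 p - slope s2 q) - slope s2 p * (slope s1 p - slope s1 q))^2
              + ((slope s1 p - slope s1 q) - (slope s2 p - slope s2 q))^2) in *.
    set (D1 := (slope s1 p - slope s2 p)^2) in *. set (D2 := (slope s1 q - slope s2 q)^2) in *.
    replace (4 * h^2 * N * C^4) with (4 * h^2 * (C^4 * N)) by ring.
    replace ((172/100 * (2 * S * (1 + S) / C^2 * h))^2 * D1 * D2 * C^4)
      with (4 * h^2 * ((172/100)^2 * (1+S)^2 * S^2 * D1 * D2)) by (field; lra).
    apply Rmult_le_compat_l; [nra | exact Hcore].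
Qed.
End SmallAngle.

Lemma grid_camera_left_of (h : R) (g : pt) : 0 < h -> ground g ->
  exists k : Z, 1/2 <= slope (IZR k * h, h) g <= 3/2.
Proof.
  intros Hh Hg. unfold ground in Hg.
  destruct (archimed (fst g / h - 1/2)) as [A1 A2].
  exists (up (fst g / h - 1/2) - 1)%Z. unfold slope; simpl. rewrite Hg, minus_IZR.
  replace ((fst g - (IZR (up (fst g / h - 1/2)) - 1) * h) / (h - 0))
    with (fst g / h - IZR (up (fst g / h - 1/2)) + 1) by (field; lra).
  lra.
Qed.

Theorem theorem3 (h alpha : R) (g : pt) :
  0 < h -> 0 < alpha -> alpha <= 1/10 -> ground g ->
  forall E : R, eps_le alpha g (viewline h) E ->
  exists si sj, grid h si /\ grid h sj /\
    eps_le alpha g (pair_set si sj) (172/100 * E).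
Proof.
  intros Hh Ha0 Ha1 Hg E HE.
  pose proof (eps_viewline_ge alpha Ha0 Ha1 h E g Hh Hg HE) as Hlow.
  destruct (grid_camera_left_of h g Hh Hg) as [k Hk].
  exists (IZR k * h, h), (IZR (k + 2) * h, h).
  split; [now exists k | split; [now exists (k + 2)%Z |]].
  intros u Hadm p q Hp Hq.
  assert (E2 : IZR (k + 2) * h = IZR k * h + 2 * h) by (rewrite plus_IZR; ring).
  assert (Hleft : pair_set (IZR k * h, h) (IZR (k + 2) * h, h) (IZR k * h, h)) by now left.
  assert (Hright : pair_set (IZR k * h, h) (IZR (k + 2) * h, h) (IZR (k + 2) * h, h)) by now right.
  pose proof (Hadm _ Hleft) as Ad1. pose proof (Hadm _ Hright) as Ad2.
  pose proof (Hp _ Hleft) as Wp1. pose proof (Hp _ Hright) as Wp2.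
  pose proof (Hq _ Hleft) as Wq1. pose proof (Hq _ Hright) as Wq2.
  rewrite E2 in Ad2, Wp2, Wq2.
  pose proof (grid_pair_dist_le alpha Ha0 Ha1 (IZR k * h) h g _ _ p q Hh Hg Hk Ad1 Ad2 Wp1 Wp2 Wq1 Wq2).
  lra.
Qed.
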